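(* Let $\mathcal{D}$ be the arena of a $p$-periodic graph on $V$, let $\mathcal{A}$ be an augmented arena of $\mathcal{D}$, and let $\mathcal{A}^*$ be the maximum augmented arena. Then $\mathcal{A}=\mathcal{A}^*$ if and only if for every $t\in\mathbb{Z}_p$ and $x,y\in V$ with $((t,x),([t+1]_p,y))\notin E(\mathcal{A})$ there is no $z\in\Gamma_t(x,\mathcal{D})$ such that $(t,y)$ is a shadow corner of $([t+1]_p,z)$ with respect to $\mathcal{A}$.
   Context: Let $V$ be a finite set and $p\ge 1$ an integer; $[t]_p$ denotes $t \bmod p$. A $p$-periodic graph $\mathcal{G}=(G_0,\dots,G_{p-1})^*$ is the infinite sequence of directed graphs $G_t=(V,E_{[t]_p})$ where $E_0,\dots,E_{p-1}\subseteq V\times V$ (self-loops allowed), each $G_i$ sinkless. An arena on $V$ of length $p$ is a directed graph with vertex set $\mathbb{Z}_p\times V$ (temporal nodes) all of whose edges have the form $((i,w),([i+1]_p,w'))$. The arena of $\mathcal{G}$ is the arena $\mathcal{D}$ with $((i,u),([i+1]_p,v))\in E(\mathcal{D})$ iff $(u,v)\in E_i$. Write $\Gamma_t(u,\mathcal{M})=\{v : ((t,u),([t+1]_p,v))\in E(\mathcal{M})\}$. Game: first the cop, then the robber choose vertices. In each round $t$, with cop at $c$ and robber at $r$, the cop must move to some $c'\in\Gamma_{[t]_p}(c,\mathcal{D})$; if $c'=r$ the cop wins; otherwise the robber must move to some $r'\in\Gamma_{[t]_p}(r,\mathcal{D})$ and the next round starts. A configuration $(t,c,r)$ ($t\in\mathbb{Z}_p$)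 is the state at the start of a round with index $\equiv t\pmod p$, cop at $c$, robber at $r$, cop to move; it is copwin if from it the cop can force capture in finitely many rounds against every robber strategy. An augmented arena of $\mathcal{D}$ is an arena $\mathcal{A}$ with $E(\mathcal{D})\subseteq E(\mathcal{A})$ such that for every edge $((t,x),([t+1]_p,y))\in E(\mathcal{A})$ the configuration $(t,x,y)$ is copwin. $\mathcal{A}^*$ denotes the maximum augmented arena, whose edge set is the union of the edge sets of all augmented arenas. Given an augmented arena $\mathcal{A}$, a temporal node $(t,u)$ is a shadow corner of $([t+1]_p,v)$ if $v\neq u$ and $\Gamma_t(u,\mathcal{D})\subseteq\Gamma_{[t+1]_p}(v,\mathcal{A})$. *)

From mathcomp Require Import all_boot.
Set Implicit Arguments. Unset Strict Implicit. Unset Printing Implicit Defensive.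

(* Time indices Z_p are represented by 'I_p; [t+1]_p is [ordS t]. *)

Definition pgraph (V : finType) (p : nat) := 'I_p -> rel V.

Definition sinkless (V : finType) (p : nat) (E : pgraph V p) : Prop :=
  forall (i : 'I_p) (u : V), exists v, E i u v.

(* An arena on V of length p: all edges have the form ((t,w),([t+1]_p,w')),
   so the arena is given by the predicate
   M t w w' <-> ((t,w),([t+1]_p,w')) \in E(M). *)
Definition arena (V : finType) (p : nat) := 'I_p -> V -> V -> Prop.

Definition arena_of (V : finType) (p : nat) (E : pgraph V p) : arena V p :=
  fun t u v => E t u v.

Definition Gamma (V : finType) (p : nat) (M : arena V p) (t : 'I_p) (u : V) : V -> Prop :=
  fun v => M t u v.

(* Configuration (t,c,r) is copwin in the game on arena D: the cop can force
   capture in finitely many rounds (least fixpoint / attractor). *)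
Inductive copwin (V : finType) (p : nat) (D : arena V p) : 'I_p -> V -> V -> Prop :=
| copwin_step (t : 'I_p) (c r c' : V) :
    Gamma D t c c' ->
    (c' = r \/ forall r', Gamma D t r r' -> copwin D (ordS t) c' r') ->
    copwin D t c r.

Definition subarena (V : finType) (p : nat) (M N : arena V p) : Prop :=
  forall t x y, M t x y -> N t x y.

Definition same_arena (V : finType) (p : nat) (M N : arena V p) : Prop :=
  forall t x y, M t x y <-> N t x y.

Definition augmented (V : finType) (p : nat) (D A : arena V p) : Prop :=
  subarena D A /\ (forall t x y, A t x y -> copwin D t x y).

Definition max_augmented (V : finType) (p : nat) (D : arena V p) : arena V p :=
  fun t x y => exists A : arena V p, augmented D A /\ A t x y.

Definition shadow_corner (V : finType) (p : nat) (D A : arena V p)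
    (t : 'I_p) (u v : V) : Prop :=
  v <> u /\ (forall w, Gamma D t u w -> Gamma A (ordS t) v w).

(* The union of all augmented arenas is the cop-winning relation itself:
   every augmented edge is cop-winning by definition, and the arena of all
   cop-winning configurations contains D (the cop captures along an edge).
   So A = A* means that A is closed under the one-round cop attractor step.
   A missing edge (t,x,y) is produced by that step exactly when the cop can
   move from x to some z ≠ y dominating every robber reply from y in A, i.e.
   when (t,y) is a shadow corner of ([t+1]_p, z). *)
From mathcomp Require Import all_boot.
From Stdlib Require Import Classical.

Set Implicit Arguments.
Unset Strict Implicit.
Unset Printing Implicit Defensive.

Section CopwinArena.

Variables (V : finType) (p : nat) (D : arena V p).

(* The generated [copwin_ind] has no induction hypothesis under the nested
   disjunction, hence this hand-rolled least-fixpoint principle. *)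
Lemma copwin_least (P : 'I_p -> V -> V -> Prop) :
  (forall t c r c', D t c c' ->
     (c' = r \/ forall r', D t r r' -> P (ordS t) c' r') -> P t c r) ->
  forall t c r, copwin D t c r -> P t c r.
Proof.
move=> closedP; fix IH 4 => t c r [{}t {}c {}r c' hcc' hwin].
apply: (closedP _ _ _ _ hcc').
by case: hwin => [-> | hwin]; [left | right => r' /hwin /IH].
Qed.

Lemma copwin_edge t x y : D t x y -> copwin D t x y.
Proof. by move=> hxy; apply: (copwin_step hxy); left. Qed.

Lemma augmented_copwin : augmented D (copwin D).
Proof. by split=> [t x y /copwin_edge|]. Qed.

Lemma max_augmentedE t x y : max_augmented D t x y <-> copwin D t x y.
Proof.
split=> [[A [[_ hwin] /hwin]] // | hxy].
by exists (copwin D); split; first exact: augmented_copwin.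
Qed.

Lemma same_max_augmentedP (A : arena V p) :
  augmented D A -> same_arena A (max_augmented D) <-> subarena (copwin D) A.
Proof.
move=> [_ hwin]; split=> [hsame t x y /max_augmentedE /hsame // | hsub t x y].
by rewrite max_augmentedE; split=> [/hwin | /hsub].
Qed.

Lemma copwin_shadow_corner (A : arena V p) t x y z :
  augmented D A -> Gamma D t x z -> shadow_corner D A t y z -> copwin D t x y.
Proof.
move=> [_ hwin] hxz [_ hshadow]; apply: (copwin_step hxz); right.
by move=> r' /hshadow /hwin.
Qed.

Lemma copwin_subarena (A : arena V p) :
  subarena D A ->
  (forall t c r c', D t c c' -> c' <> r ->
     (forall r', D t r r' -> A (ordS t) c' r') -> A t c r) ->
  subarena (copwin D) A.
Proof.
move=> hDA closedA; apply: copwin_least => t c r c' hcc' hnext.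
have [<- | /eqP neq] := eqVneq c' r; first exact: hDA.
by case: hnext => // hwin; apply: closedA hcc' neq hwin.
Qed.

End CopwinArena.

Theorem theorem3 (V : finType) (p : nat) (hp : 0 < p) (E : pgraph V p)
  (hE : sinkless E) (A : arena V p) (hA : augmented (arena_of E) A) :
  same_arena A (max_augmented (arena_of E)) <->
  (forall (t : 'I_p) (x y : V), ~ A t x y ->
     ~ (exists z, Gamma (arena_of E) t x z /\
                  shadow_corner (arena_of E) A t y z)).
Proof.
rewrite same_max_augmentedP //; split.
  move=> hsub t x y nA [z [hxz hshadow]].
  exact: nA (hsub _ _ _ (copwin_shadow_corner hA hxz hshadow)).
move=> hcond; apply: copwin_subarena => [|t c r c' hcc' neq hwin]; first by case: hA.
apply: NNPP => nA; apply: (hcond t c r nA).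
by exists c'; split => //; split.
Qed.
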